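(* Let $N_1,N_2$ be positive integers and let $\mathbf K_1\in\mathbb C^{N_1\times N_1}$, $\mathbf K_2\in\mathbb C^{N_2\times N_2}$ be constant invertible matrices having no eigenvalue in common. Let $\mathbf x=(x_n)_{n\in\mathbb Z}$ be infinitely many independent complex variables, and let $\mathbf M_1$ ($N_1\times N_2$), $\mathbf M_2$ ($N_2\times N_1$), $\mathbf r_i,\mathbf s_i$ ($N_i\times 1$ column vectors, $i=1,2$) be functions of $\mathbf x$. Put $$\mathbf K=\begin{pmatrix}\mathbf K_1&0\\0&\mathbf K_2\end{pmatrix},\ \mathbf M=\begin{pmatrix}0&\mathbf M_1\\ \mathbf M_2&0\end{pmatrix},\ \mathbf A=\begin{pmatrix}\mathbf I_{N_1}&0\\0&-\mathbf I_{N_2}\end{pmatrix},\ \mathbf r=\begin{pmatrix}\mathbf r_1&0\\0&\mathbf r_2\end{pmatrix},\ \mathbf s=\begin{pmatrix}0&\mathbf s_1\\ \mathbf s_2&0\end{pmatrix},$$ and assume the Sylvester equation $\mathbf K\mathbf M-\mathbf M\mathbf K=\mathbf r\mathbf s^T$ and the dispersion relations $\mathbf r_{x_n}=\mathbf A\mathbf K^n\mathbf r$, $\mathbf s_{x_n}=\mathbf A(\mathbf K^T)^n\mathbf s$ for all $n\in\mathbb Z$. Assume $\mathbf I+\mathbf M$ is invertible ($\mathbf I$ the identity of order $N_1+N_2$). Define the $2\times2$ matrices $$\mathbf u=\mathbf s^T(\mathbf I+\mathbf M)^{-1}\mathbf r,\qquad \mathbf v=\mathbf I_2-\mathbf s^T(\mathbf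 I+\mathbf M)^{-1}\mathbf K^{-1}\mathbf r.$$ Then for every $n\in\mathbb Z$, $$\mathbf v_{x_{n+1}}\mathbf v^{-1}=-\mathbf u_{x_n}.$$
   Context: Subscripts $x_n$ denote partial derivatives with respect to $x_n$. $\mathbf I_{k}$ denotes the $k\times k$ identity matrix. *)

From HB Require Import structures.
From mathcomp Require Import all_boot all_order all_algebra.
From mathcomp Require Import complex.
From mathcomp Require Import reals.
Set Implicit Arguments. Unset Strict Implicit. Unset Printing Implicit Defensive.
Import Order.TTheory GRing.Theory Num.Theory.
Local Open Scope ring_scope.

Definition shift_coord (C : Type) (addC : C -> C -> C)
  (x : int -> C) (n : int) (h : C) : int -> C :=
  fun m => if m == n then addC (x m) h else x m.

Definition has_pderiv (R : realType) (p q : nat)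
  (f : (int -> R[i]) -> 'M[R[i]]_(p, q)) (n : int) (x : int -> R[i])
  (D : 'M[R[i]]_(p, q)) : Prop :=
  forall (a : 'I_p) (b : 'I_q) (eps : R[i]), 0 < eps ->
    exists2 delta : R[i], 0 < delta &
      forall h : R[i], h != 0 -> `|h| < delta ->
        `|(f (shift_coord +%R x n h) a b - f x a b) / h - D a b| < eps.

Definition mxpown (F : fieldType) (m : nat) (K : 'M[F]_m) (k : nat) : 'M[F]_m :=
  iter k (mulmx K) 1%:M.

Definition mxpowz (F : fieldType) (m : nat) (K : 'M[F]_m) (z : int) : 'M[F]_m :=
  match z with
  | Posz k => mxpown K k
  | Negz k => mxpown (invmx K) k.+1
  end.

(* The derivative of M is not assumed.  Since K1 and K2 have no common
   eigenvalue, the Sylvester maps X |-> K1 X - X K2 and X |-> K2 X - X K1 are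
   injective (Cayley-Hamilton), hence have continuous linear inverses, so the
   off-diagonal blocks of M inherit differentiability from r s^T; the
   differentiated Sylvester equation then gives M_{x_n} = A K^n M + M K^n A.
   With W = (I + M)^-1, every s^T W C r with C commuting with A K^n has
   x_n-derivative 2 s^T W A K^n W C r.  Taking C = I gives u_{x_n}; taking
   C = K^-1 and n + 1 gives v_{x_{n+1}} = -2 s^T W A K^n K W K^-1 r, which the
   Sylvester equation, in the form W r s^T W = W K - K W, turns into
   -u_{x_n} v.  The same identity for K^-1 shows that v is invertible. *)

From HB Require Import structures.
From mathcomp Require Import all_boot all_order all_algebra.
From mathcomp Require Import complex reals.
From mathcomp Require Import boolp classical_sets topology normedtype.
Set Implicit Arguments. Unset Strict Implicit. Unset Printing Implicit Defensive.
Import Order.TTheory GRing.Theory Num.Theory.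
Import numFieldTopology.Exports numFieldNormedType.Exports.
Local Open Scope classical_set_scope.
Local Open Scope ring_scope.

Definition sylvester (R : comNzRingType) m n (A : 'M[R]_m) (B : 'M[R]_n)
    (X : 'M[R]_(m, n)) : 'M[R]_(m, n) :=
  A *m X - X *m B.

Fact sylvester_is_linear (R : comNzRingType) m n (A : 'M[R]_m) (B : 'M[R]_n) :
  linear (sylvester A B).
Proof.
move=> a X Y; rewrite /sylvester mulmxDr mulmxDl -scalemxAr -scalemxAl.
by rewrite scalerBr opprD addrACA.
Qed.

HB.instance Definition _ (R : comNzRingType) m n (A : 'M[R]_m) (B : 'M[R]_n) :=
  GRing.isLinear.Build R 'M[R]_(m, n) 'M[R]_(m, n) _ (sylvester A B)
    (sylvester_is_linear A B).

Lemma horner_mx_intertwine (R : comNzRingType) m n (A : 'M[R]_m.+1) (B : 'M[R]_n.+1)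
    (X : 'M[R]_(m.+1, n.+1)) (p : {poly R}) :
  A *m X = X *m B -> horner_mx A p *m X = X *m horner_mx B p.
Proof.
move=> AX; elim/poly_ind: p => [|p c IHp]; first by rewrite !rmorph0 mul0mx mulmx0.
rewrite !rmorphD !rmorphM /= !horner_mx_X !horner_mx_C -!mulmxE.
by rewrite mulmxDl mulmxDr -mulmxA AX mulmxA IHp -mulmxA scalar_mxC.
Qed.

Lemma sylvester_inj (F : closedFieldType) m n (A : 'M[F]_m) (B : 'M[F]_n) :
  (forall a, eigenvalue A a -> ~~ eigenvalue B a) -> injective (sylvester A B).
Proof.
move=> AB; apply: raddf_inj => X /eqP; rewrite subr_eq0 => /eqP.
case: n B X AB => [|n] B X AB AX; first by rewrite thinmx0.
case: m A X AB AX => [|m] A X AB AX; first by rewrite flatmx0.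
(* char_poly B kills X from the right, but evaluated at A it is invertible. *)
have := horner_mx_intertwine (char_poly B) AX.
rewrite Cayley_Hamilton mulmx0.
have [rs rsE] := closed_field_poly_normal (char_poly B).
rewrite (monicP (char_poly_monic B)) scale1r in rsE.
suff pA_unit : horner_mx A (char_poly B) \in unitmx.
  by move/(congr1 (mulmx (invmx (horner_mx A (char_poly B)))));
     rewrite mulmxA mulVmx // mul1mx mulmx0.
rewrite rsE rmorph_prod /= big_seq.
apply: (big_ind (fun Y : 'M_m.+1 => Y \in unitmx)) => [|Y Z|z z_rs].
- exact: unitmx1.
- by rewrite -mulmxE unitmx_mul => -> ->.
have : ~~ eigenvalue A z.
  by apply/negP => /AB; rewrite eigenvalue_root_char rsE root_prod_XsubC z_rs.
by rewrite /eigenvalue negbK kermx_eq0 row_free_unit rmorphB /= horner_mx_X horner_mx_C.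
Qed.

Section MatrixIntegerPowers.
Variables (F : fieldType) (N : nat).
Implicit Types (K B : 'M[F]_N).

Lemma mxpown_comm K B k : B *m K = K *m B -> B *m mxpown K k = mxpown K k *m B.
Proof.
move=> BK; elim: k => [|k IHk] /=; first by rewrite mulmx1 mul1mx.
by rewrite mulmxA BK -mulmxA IHk mulmxA.
Qed.

Lemma mxpown_tr K k : mxpown K^T k = (mxpown K k)^T.
Proof.
elim: k => [|k IHk] /=; first by rewrite trmx1.
by rewrite IHk -trmx_mul (mxpown_comm k (erefl (K *m K))).
Qed.

Lemma mxpowz_tr K z : mxpowz K^T z = (mxpowz K z)^T.
Proof. by case: z => k; rewrite /mxpowz -?trmx_inv mxpown_tr. Qed.

Lemma invmx_comm K B : K \in unitmx -> B *m K = K *m B -> B *m invmx K = invmx K *m B.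
Proof.
move=> K_unit BK; rewrite -[invmx K *m B]mulmx1 -(mulmxV K_unit) !mulmxA.
by rewrite -(mulmxA _ B) BK !mulmxA mulVmx // mul1mx.
Qed.

Lemma mxpowz_comm K B z :
  K \in unitmx -> B *m K = K *m B -> B *m mxpowz K z = mxpowz K z *m B.
Proof.
move=> K_unit BK; case: z => k; apply: mxpown_comm => //.
exact: invmx_comm.
Qed.

Lemma mxpowzS K z : K \in unitmx -> mxpowz K (z + 1) = mxpowz K z *m K.
Proof.
move=> K_unit; case: z => [k|[|k]].
- have -> : Posz k + 1 = Posz k.+1 by rewrite -addn1 PoszD.
  by rewrite /= (mxpown_comm k (erefl (K *m K))).
- by rewrite /= mulmx1 mulVmx.
have -> : Negz k.+1 + 1 = Negz k by rewrite !NegzE -[k.+2]addn1 PoszD opprD addrNK.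
rewrite /= -!mulmxA.
by rewrite -(mxpown_comm k (invmx_comm K_unit (erefl (K *m K)))) mulKmx.
Qed.

End MatrixIntegerPowers.

Section Resolvent.
Variables (F : fieldType) (N : nat) (M W : 'M[F]_N).
Hypotheses (WM : W *m (1%:M + M) = 1%:M) (MW : (1%:M + M) *m W = 1%:M).

Lemma resolvent_mulr : W *m M = 1%:M - W.
Proof. by rewrite -WM mulmxDr mulmx1 [W + _]addrC addrK. Qed.

Lemma resolvent_mull : M *m W = 1%:M - W.
Proof. by rewrite -MW mulmxDl mul1mx [W + _]addrC addrK. Qed.

Lemma resolvent_sandwich (A P : 'M[F]_N) : A *m P = P *m A ->
  P *m A *m W - W *m (A *m P *m M + M *m P *m A) *m W + W *m A *m P
  = (W *m A *m P *m W) *+ 2.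
Proof.
move=> AP; rewrite mulmxDr mulmxDl opprD.
have -> : W *m (A *m P *m M) *m W = W *m A *m P - W *m A *m P *m W.
  by rewrite -!mulmxA resolvent_mull !mulmxBr !mulmx1.
have -> : W *m (M *m P *m A) *m W = P *m A *m W - W *m A *m P *m W.
  by rewrite !mulmxA resolvent_mulr !mulmxBl !mul1mx -[W *m P *m A]mulmxA -AP !mulmxA.
by rewrite !opprB addrCA subrKC addrAC subrK mulr2n.
Qed.

Lemma resolvent_commutator k K (r : 'M[F]_(N, k)) (sT : 'M[F]_(k, N)) :
  K *m M - M *m K = r *m sT -> W *m r *m sT *m W = W *m K - K *m W.
Proof.
move=> sylvesterKM; rewrite -[W *m r *m sT]mulmxA -sylvesterKM mulmxBr mulmxBl.
rewrite -!mulmxA resolvent_mull !mulmxA resolvent_mulr !mulmxBr !mulmxBl.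
by rewrite !mulmx1 !mul1mx opprB addrA subrK.
Qed.

End Resolvent.

Lemma sylvester_invmx (F : fieldType) N k (K M : 'M[F]_N)
    (r : 'M[F]_(N, k)) (sT : 'M[F]_(k, N)) :
  K \in unitmx -> K *m M - M *m K = r *m sT ->
  invmx K *m M - M *m invmx K = (- (invmx K *m r)) *m (sT *m invmx K).
Proof.
move=> K_unit sylvesterKM.
rewrite mulNmx !mulmxA -[invmx K *m r *m sT]mulmxA -sylvesterKM.
rewrite mulmxBr mulmxBl !mulmxA mulVmx // mul1mx -!mulmxA mulmxV // mulmx1.
by rewrite opprB.
Qed.

Section ResolventConjugate.
Variables (F : fieldType) (N k : nat) (K M W : 'M[F]_N).
Variables (r : 'M[F]_(N, k)) (sT : 'M[F]_(k, N)).
Hypotheses (WM : W *m (1%:M + M) = 1%:M) (MW : (1%:M + M) *m W = 1%:M).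
Hypotheses (K_unit : K \in unitmx) (sylvesterKM : K *m M - M *m K = r *m sT).
Local Notation v := (1%:M - sT *m W *m invmx K *m r).

Lemma resolvent_conj_factor (X : 'M[F]_(k, N)) :
  X *m K *m W *m invmx K *m r = X *m W *m r *m v.
Proof.
rewrite mulmxBr mulmx1 !mulmxA.
have -> : X *m W *m r *m sT *m W = X *m (W *m r *m sT *m W) by rewrite !mulmxA.
rewrite (resolvent_commutator WM MW sylvesterKM) mulmxBr !mulmxBl !mulmxA mulmxK //.
by rewrite opprB subrKC.
Qed.

Lemma resolvent_conj_unit : v \in unitmx.
Proof.
have := resolvent_commutator WM MW (sylvester_invmx K_unit sylvesterKM).
rewrite mulmxN !mulNmx !mulmxA => /eqP; rewrite eqr_oppLR opprB => /eqP commKi.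
suff /mulmx1_unit[] : v *m (1%:M + sT *m invmx K *m W *m r) = 1%:M by [].
rewrite mulmxBl mul1mx mulmxDr mulmx1.
have -> : sT *m W *m invmx K *m r *m (sT *m invmx K *m W *m r)
    = sT *m (W *m invmx K *m r *m sT *m invmx K *m W) *m r by rewrite !mulmxA.
by rewrite commKi mulmxBr mulmxBl !mulmxA subrKC addrK.
Qed.

End ResolventConjugate.

Section BlockCommutator.
Variables (R : comNzRingType) (N1 N2 : nat) (K1 : 'M[R]_N1) (K2 : 'M[R]_N2).
Local Notation K := (block_mx K1 0 0 K2).

Lemma ursubmx_commutator (X : 'M[R]_(N1 + N2)) :
  ursubmx (K *m X - X *m K) = sylvester K1 K2 (ursubmx X).
Proof.
rewrite -[X in LHS]submxK !mulmx_block !mulmx0 !mul0mx !addr0 !add0r.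
by rewrite opp_block_mx add_block_mx block_mxKur.
Qed.

Lemma dlsubmx_commutator (X : 'M[R]_(N1 + N2)) :
  dlsubmx (K *m X - X *m K) = sylvester K2 K1 (dlsubmx X).
Proof.
rewrite -[X in LHS]submxK !mulmx_block !mulmx0 !mul0mx !addr0 !add0r.
by rewrite opp_block_mx add_block_mx block_mxKdl.
Qed.

End BlockCommutator.

Lemma anticomm_offdiag (R : numFieldType) N1 N2 (E : 'M[R]_(N1 + N2)) :
  block_mx 1%:M 0 0 (- 1%:M) *m E = - (E *m block_mx 1%:M 0 0 (- 1%:M)) ->
  E = block_mx 0 (ursubmx E) (dlsubmx E) 0.
Proof.
have eq_opp_0 m n (X : 'M[R]_(m, n)) : X = - X -> X = 0.
  move/eqP; rewrite -subr_eq0 opprK -mulr2n -scaler_nat scaler_eq0 pnatr_eq0.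
  by move/eqP.
rewrite -[E]submxK !mulmx_block !mulmx0 !mul0mx !addr0 !add0r !mul1mx !mulmx1.
rewrite !mulNmx !mulmxN !mul1mx !mulmx1 opp_block_mx !opprK.
move/eq_block_mx => [/eq_opp_0 -> _ _ /esym/eq_opp_0 ->].
by rewrite block_mxKur block_mxKdl.
Qed.

Lemma sylvester_mulmx (R : comNzRingType) N (K X Y : 'M[R]_N) :
  sylvester K K (X *m Y) = sylvester K K X *m Y + X *m sylvester K K Y.
Proof. by rewrite /sylvester mulmxBl mulmxBr !mulmxA addrA subrK. Qed.

Lemma sylvester_sandwich (R : comNzRingType) N (K A P M : 'M[R]_N) :
  A *m K = K *m A -> P *m K = K *m P ->
  sylvester K K (A *m P *m M + M *m P *m A)
  = A *m P *m sylvester K K M + sylvester K K M *m P *m A.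
Proof.
move=> AK PK; have comm0 X : X *m K = K *m X -> sylvester K K X = 0.
  by move=> XK; rewrite /sylvester XK subrr.
rewrite linearD /= -(mulmxA M) sylvester_mulmx (comm0 (A *m P)); last first.
  by rewrite -mulmxA PK !mulmxA AK.
rewrite sylvester_mulmx (comm0 (P *m A)); last by rewrite -mulmxA AK !mulmxA PK.
by rewrite mul0mx add0r mulmx0 addr0 mulmxA.
Qed.

Lemma anticomm_sandwich (R : comNzRingType) N (A B M : 'M[R]_N) :
  A *m B = B *m A -> A *m M = - (M *m A) ->
  A *m (B *m M + M *m B) = - ((B *m M + M *m B) *m A).
Proof.
move=> AB AM; rewrite mulmxDr mulmxDl opprD !mulmxA AB AM mulNmx.
by rewrite -(mulmxA B A M) AM mulmxN mulmxA -(mulmxA M A B) AB mulmxA.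
Qed.

Section MatrixLimits.
Context {K : numFieldType} {T : Type} {F : set_system T} {FF : Filter F}.

Lemma cvg_mxP m n (f : T -> 'M[K]_(m, n)) (L : 'M[K]_(m, n)) :
  f @ F --> L <-> forall i j, f x i j @[x --> F] --> L i j.
Proof.
split=> [fL i j | fL].
  exact: (continuous_cvg _ (@coord_continuous K m n i j L) fL).
move=> A [P PL sPA].
have : \forall x \near F, forall ij : 'I_m * 'I_n, P ij.1 ij.2 (f x ij.1 ij.2).
  by apply: filter_forall => -[i j]; exact: fL.
by apply: filterS => x Px; apply: sPA => i j; exact: (Px (i, j)).
Qed.

Lemma cvg_sum (V : normedModType K) (I : Type) (r : seq I) (P : pred I)
    (f : I -> T -> V) (L : I -> V) :
  (forall i, P i -> f i x @[x --> F] --> L i) ->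
  \sum_(i <- r | P i) f i x @[x --> F] --> \sum_(i <- r | P i) L i.
Proof. exact: (@cvg_big V I +%R 0 P add_continuous T F r f L FF). Qed.

Lemma cvg_prod (I : Type) (r : seq I) (P : pred I) (f : I -> T -> K) (L : I -> K) :
  (forall i, P i -> f i x @[x --> F] --> L i) ->
  \prod_(i <- r | P i) f i x @[x --> F] --> \prod_(i <- r | P i) L i.
Proof. exact: (@cvg_big K I *%R 1 P mul_continuous T F r f L FF). Qed.

Lemma cvg_mulmx m n p (f : T -> 'M[K]_(m, n)) (g : T -> 'M[K]_(n, p))
    (A : 'M[K]_(m, n)) (B : 'M[K]_(n, p)) :
  f @ F --> A -> g @ F --> B -> f x *m g x @[x --> F] --> A *m B.
Proof.
move=> /cvg_mxP fA /cvg_mxP gB; apply/cvg_mxP => i k; rewrite mxE.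
under eq_cvg do rewrite mxE.
by apply: cvg_sum => j _; apply: cvgM.
Qed.

Lemma cvg_linear_mx m n p q (f : {linear 'M[K]_(m, n) -> 'M[K]_(p, q)})
    (g : T -> 'M[K]_(m, n)) (L : 'M[K]_(m, n)) :
  g @ F --> L -> f (g x) @[x --> F] --> f L.
Proof.
have fE Y : f Y = \sum_i \sum_j Y i j *: f (delta_mx i j).
  rewrite {1}[Y]matrix_sum_delta linear_sum; apply: eq_bigr => i _.
  by rewrite linear_sum; apply: eq_bigr => j _; rewrite linearZ.
move=> /cvg_mxP gL; rewrite fE; under eq_cvg do rewrite fE.
apply: cvg_sum => i _; apply: cvg_sum => j _.
by apply: cvgZ; [exact: gL | exact: cvg_cst].
Qed.

Lemma cvg_linear_mx_inj m n (f : {linear 'M[K]_(m, n) -> 'M[K]_(m, n)})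
    (g : T -> 'M[K]_(m, n)) (L : 'M[K]_(m, n)) :
  injective f -> f (g x) @[x --> F] --> f L -> g @ F --> L.
Proof.
move=> f_inj fgL.
have lin_f_unit : lin_mx f \in unitmx.
  rewrite -row_free_unit; apply/inj_row_free => v.
  rewrite mul_rV_lin => /eqP; rewrite mxvec_eq0 -(linear0 f) => /eqP/f_inj/eqP.
  by rewrite vec_mx_eq0 => /eqP.
have fK X : vec_mx (mxvec (f X) *m invmx (lin_mx f)) = X.
  by rewrite -mul_vec_lin mulmxK // mxvecK.
rewrite -[L]fK; under eq_cvg => x do rewrite -[g x]fK.
apply: cvg_linear_mx; apply: cvg_mulmx; last exact: cvg_cst.
exact: cvg_linear_mx.
Qed.

Lemma cvg_det n (f : T -> 'M[K]_n) (L : 'M[K]_n) :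
  f @ F --> L -> \det (f x) @[x --> F] --> \det L.
Proof.
move=> /cvg_mxP fL; apply: cvg_sum => s _; apply: cvgM; first exact: cvg_cst.
by apply: cvg_prod => i _; exact: fL.
Qed.

Lemma cvg_adj n (f : T -> 'M[K]_n) (L : 'M[K]_n) :
  f @ F --> L -> \adj (f x) @[x --> F] --> \adj L.
Proof.
move=> fL; apply/cvg_mxP => i j; rewrite mxE; under eq_cvg do rewrite mxE.
apply: cvgM; first exact: cvg_cst.
by apply: cvg_det; apply: cvg_linear_mx; apply: cvg_linear_mx.
Qed.

Lemma near_unitmx n (f : T -> 'M[K]_n) (L : 'M[K]_n) :
  L \in unitmx -> f @ F --> L -> \forall x \near F, f x \in unitmx.
Proof.
move=> L_unit fL; near=> x; rewrite unitmxE unitfE; near: x.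
by apply: cvgr_neq0 _ (cvg_det fL) _; rewrite -unitfE -unitmxE.
Unshelve. all: by end_near. Qed.

Lemma cvg_invmx n (f : T -> 'M[K]_n) (L : 'M[K]_n) :
  L \in unitmx -> f @ F --> L -> invmx (f x) @[x --> F] --> invmx L.
Proof.
move=> L_unit fL.
apply: cvg_trans (near_eq_cvg (f := fun x => (\det (f x))^-1 *: \adj (f x)) _) _.
  by near=> x; rewrite /invmx ifT //; near: x; exact: near_unitmx L_unit fL.
rewrite /invmx L_unit; apply: cvgZ; last exact: cvg_adj.
by apply: cvgV (cvg_det fL); rewrite -unitfE -unitmxE.
Unshelve. all: by end_near. Qed.

Lemma cvg_block_mx m1 m2 n1 n2
    (f1 : T -> 'M[K]_(m1, n1)) (f2 : T -> 'M[K]_(m1, n2))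
    (f3 : T -> 'M[K]_(m2, n1)) (f4 : T -> 'M[K]_(m2, n2))
    (L1 : 'M[K]_(m1, n1)) (L2 : 'M[K]_(m1, n2))
    (L3 : 'M[K]_(m2, n1)) (L4 : 'M[K]_(m2, n2)) :
  f1 @ F --> L1 -> f2 @ F --> L2 -> f3 @ F --> L3 -> f4 @ F --> L4 ->
  block_mx (f1 x) (f2 x) (f3 x) (f4 x) @[x --> F] --> block_mx L1 L2 L3 L4.
Proof.
move=> /cvg_mxP f1L /cvg_mxP f2L /cvg_mxP f3L /cvg_mxP f4L; apply/cvg_mxP => i j.
rewrite -(splitK i) -(splitK j).
case: (split i) => i'; case: (split j) => j';
  rewrite ?(block_mxEul, block_mxEur, block_mxEdl, block_mxEdr);
  under eq_cvg do rewrite ?(block_mxEul, block_mxEur, block_mxEdl, block_mxEdr).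
all: by [apply: f1L | apply: f2L | apply: f3L | apply: f4L].
Qed.

End MatrixLimits.


Definition pdquot (K : numFieldType) p q (f : (int -> K) -> 'M[K]_(p, q))
    (n : int) (x : int -> K) (h : K) : 'M[K]_(p, q) :=
  h^-1 *: (f (shift_coord +%R x n h) - f x).

Definition is_pderiv (K : numFieldType) p q (f : (int -> K) -> 'M[K]_(p, q))
    (n : int) (x : int -> K) (D : 'M[K]_(p, q)) : Prop :=
  pdquot f n x h @[h --> 0^'] --> D.

Section PartialDerivative.
Context {K : numFieldType} (n : int) (x : int -> K).
Local Notation xh h := (shift_coord +%R x n h).

Lemma is_pderiv_cvg p q (f : _ -> 'M[K]_(p, q)) D :
  is_pderiv f n x D -> f (xh h) @[h --> 0^'] --> f x.
Proof.
move=> fD.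
apply: cvg_trans (near_eq_cvg (f := fun h => f x + h *: pdquot f n x h) _) _.
  near=> h; rewrite /pdquot scalerA divff ?scale1r ?subrKC //.
  by near: h; exact: nbhs_dnbhs_neq.
have h0 : h @[h --> (0 : K)^'] --> 0 by exact: nbhs_dnbhs.
have := cvgD (cvg_cst (f x)) (cvgZ h0 fD).
by rewrite scale0r addr0; apply.
Unshelve. all: by end_near. Qed.

Lemma is_pderiv_cst p q (c : 'M[K]_(p, q)) : is_pderiv (fun => c) n x 0.
Proof.
rewrite /is_pderiv /pdquot; under eq_cvg do rewrite subrr scaler0.
exact: cvg_cst.
Qed.

Lemma is_pderivD p q (f g : _ -> 'M[K]_(p, q)) Df Dg :
  is_pderiv f n x Df -> is_pderiv g n x Dg ->
  is_pderiv (fun y => f y + g y) n x (Df + Dg).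
Proof.
have qE h : pdquot (fun y => f y + g y) n x h = pdquot f n x h + pdquot g n x h.
  by rewrite /pdquot -scalerDr opprD addrACA.
by move=> fD gD; rewrite /is_pderiv; under eq_cvg do rewrite qE; exact: cvgD.
Qed.

Lemma is_pderivB p q (f g : _ -> 'M[K]_(p, q)) Df Dg :
  is_pderiv f n x Df -> is_pderiv g n x Dg ->
  is_pderiv (fun y => f y - g y) n x (Df - Dg).
Proof.
have qE h : pdquot (fun y => f y - g y) n x h = pdquot f n x h - pdquot g n x h.
  by rewrite /pdquot -scalerBr !opprD !opprK addrACA.
by move=> fD gD; rewrite /is_pderiv; under eq_cvg do rewrite qE; exact: cvgB.
Qed.

Lemma is_pderiv_linear p q p' q' (L : {linear 'M[K]_(p, q) -> 'M[K]_(p', q')})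
    f D :
  is_pderiv f n x D -> is_pderiv (fun y => L (f y)) n x (L D).
Proof.
have qE h : pdquot (fun y => L (f y)) n x h = L (pdquot f n x h).
  by rewrite /pdquot linearZ (linearB L).
by move=> fD; rewrite /is_pderiv; under eq_cvg do rewrite qE; exact: cvg_linear_mx.
Qed.

Lemma is_pderiv_linear_inj p q (L : {linear 'M[K]_(p, q) -> 'M[K]_(p, q)}) f D :
  injective L -> is_pderiv (fun y => L (f y)) n x (L D) -> is_pderiv f n x D.
Proof.
have qE h : pdquot (fun y => L (f y)) n x h = L (pdquot f n x h).
  by rewrite /pdquot linearZ (linearB L).
move=> L_inj; rewrite /is_pderiv; under eq_cvg do rewrite qE.
exact: cvg_linear_mx_inj.
Qed.

Lemma is_pderiv_mulmx p q r (f : _ -> 'M[K]_(p, q)) (g : _ -> 'M[K]_(q, r))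
    Df Dg :
  is_pderiv f n x Df -> is_pderiv g n x Dg ->
  is_pderiv (fun y => f y *m g y) n x (Df *m g x + f x *m Dg).
Proof.
have qE h : pdquot (fun y => f y *m g y) n x h =
    pdquot f n x h *m g (xh h) + f x *m pdquot g n x h.
  by rewrite /pdquot -scalemxAl -scalemxAr -scalerDr mulmxBl mulmxBr addrA subrK.
move=> fD gD; rewrite /is_pderiv; under eq_cvg do rewrite qE.
by apply: cvgD; apply: cvg_mulmx => //; [exact: is_pderiv_cvg gD | exact: cvg_cst].
Qed.

Lemma is_pderiv_invmx p (f : _ -> 'M[K]_p) Df :
  f x \in unitmx -> is_pderiv f n x Df ->
  is_pderiv (fun y => invmx (f y)) n x (- (invmx (f x) *m Df *m invmx (f x))).
Proof.
move=> fx_unit fD; have fxh := is_pderiv_cvg fD.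
apply: cvg_trans (near_eq_cvg
  (f := fun h => - (invmx (f (xh h)) *m pdquot f n x h *m invmx (f x))) _) _.
  near=> h; have fxh_unit : f (xh h) \in unitmx.
    by near: h; exact: near_unitmx fx_unit fxh.
  rewrite /pdquot -scalemxAr -scalemxAl -scalerN mulmxBr mulmxBl opprB.
  by rewrite mulVmx // mul1mx -mulmxA mulmxV // mulmx1.
apply: cvgN; apply: cvg_mulmx; last exact: cvg_cst.
by apply: cvg_mulmx fD; exact: cvg_invmx fx_unit fxh.
Unshelve. all: by end_near. Qed.

Lemma is_pderiv_block_mx m1 m2 n1 n2
    (f1 : _ -> 'M[K]_(m1, n1)) (f2 : _ -> 'M[K]_(m1, n2))
    (f3 : _ -> 'M[K]_(m2, n1)) (f4 : _ -> 'M[K]_(m2, n2)) D1 D2 D3 D4 :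
  is_pderiv f1 n x D1 -> is_pderiv f2 n x D2 ->
  is_pderiv f3 n x D3 -> is_pderiv f4 n x D4 ->
  is_pderiv (fun y => block_mx (f1 y) (f2 y) (f3 y) (f4 y)) n x
    (block_mx D1 D2 D3 D4).
Proof.
have qE h : pdquot (fun y => block_mx (f1 y) (f2 y) (f3 y) (f4 y)) n x h =
    block_mx (pdquot f1 n x h) (pdquot f2 n x h) (pdquot f3 n x h) (pdquot f4 n x h).
  by rewrite /pdquot opp_block_mx add_block_mx scale_block_mx.
move=> f1D f2D f3D f4D; rewrite /is_pderiv; under eq_cvg do rewrite qE.
exact: cvg_block_mx.
Qed.

End PartialDerivative.

Lemma is_pderivP (K : numFieldType) p q (f : (int -> K) -> 'M[K]_(p, q)) n x D :
  is_pderiv f n x D <->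
  forall (a : 'I_p) (b : 'I_q) (eps : K), 0 < eps ->
    exists2 delta : K, 0 < delta &
      forall h : K, h != 0 -> `|h| < delta ->
        `|(f (shift_coord +%R x n h) a b - f x a b) / h - D a b| < eps.
Proof.
split=> [/cvg_mxP fD a b e e0 | fD].
  move/cvgrPdist_lt: (fD a b) => /(_ e e0).
  rewrite near_withinE => /nbhs_ballP[d /= d0 dD]; exists d => // h h0 hd.
  have := dD h; rewrite /ball /= sub0r normrN => /(_ hd h0).
  by rewrite !mxE distrC mulrC.
apply/cvg_mxP => a b; apply/cvgrPdist_lt => e e0.
have [d d0 dD] := fD a b e e0; near=> h.
rewrite !mxE distrC mulrC; apply: dD; first by near: h; exact: nbhs_dnbhs_neq.
by near: h; exact: dnbhs0_lt.
Unshelve. all: by end_near. Qed.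

Lemma has_pderivP (R : realType) p q (f : (int -> R[i]) -> 'M[R[i]]_(p, q)) n x D :
  has_pderiv f n x D <-> is_pderiv f n x D.
Proof. exact: iff_sym (is_pderivP f n x D). Qed.

Lemma is_pderiv_offdiag (F : numFieldType) N1 N2 (K1 : 'M[F]_N1) (K2 : 'M[F]_N2)
    (M1 : (int -> F) -> 'M[F]_(N1, N2)) (M2 : (int -> F) -> 'M[F]_(N2, N1))
    (Q : (int -> F) -> 'M[F]_(N1 + N2)) n x (E : 'M[F]_(N1 + N2)) :
  injective (sylvester K1 K2) -> injective (sylvester K2 K1) ->
  (forall y, block_mx K1 0 0 K2 *m block_mx 0 (M1 y) (M2 y) 0
             - block_mx 0 (M1 y) (M2 y) 0 *m block_mx K1 0 0 K2 = Q y) ->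
  is_pderiv Q n x (block_mx K1 0 0 K2 *m E - E *m block_mx K1 0 0 K2) ->
  E = block_mx 0 (ursubmx E) (dlsubmx E) 0 ->
  is_pderiv (fun y => block_mx 0 (M1 y) (M2 y) 0) n x E.
Proof.
move=> inj12 inj21 QE DQ E_offdiag; rewrite E_offdiag.
apply: is_pderiv_block_mx; try exact: is_pderiv_cst.
- apply: (is_pderiv_linear_inj inj12).
  have -> : (fun y => sylvester K1 K2 (M1 y)) = fun y => ursubmx (Q y).
    by apply/funext => y; rewrite -QE ursubmx_commutator block_mxKur.
  by rewrite /= -ursubmx_commutator /ursubmx; do 2!apply: is_pderiv_linear.
- apply: (is_pderiv_linear_inj inj21).
  have -> : (fun y => sylvester K2 K1 (M2 y)) = fun y => dlsubmx (Q y).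
    by apply/funext => y; rewrite -QE dlsubmx_commutator block_mxKdl.
  by rewrite /= -dlsubmx_commutator /dlsubmx; do 2!apply: is_pderiv_linear.
Qed.

Lemma is_pderiv_resolvent_form (F : numFieldType) N k (A P C : 'M[F]_N)
    (M : (int -> F) -> 'M[F]_N) (r : (int -> F) -> 'M[F]_(N, k))
    (sT : (int -> F) -> 'M[F]_(k, N)) n x :
  A *m P = P *m A -> C *m (A *m P) = A *m P *m C -> (1%:M + M x) \in unitmx ->
  is_pderiv r n x (A *m P *m r x) -> is_pderiv sT n x (sT x *m P *m A) ->
  is_pderiv M n x (A *m P *m M x + M x *m P *m A) ->
  is_pderiv (fun y => sT y *m invmx (1%:M + M y) *m C *m r y) n x
    ((sT x *m invmx (1%:M + M x) *m A *m P *m invmx (1%:M + M x) *m C *m r x) *+ 2).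
Proof.
move=> AP CAP Mx_unit Dr DsT DM.
have DW := is_pderiv_invmx Mx_unit (is_pderivD (is_pderiv_cst n x 1%:M) DM).
have DsTWC := is_pderiv_mulmx (is_pderiv_mulmx DsT DW) (is_pderiv_cst n x C).
have := is_pderiv_mulmx DsTWC Dr.
set W := invmx (1%:M + M x); rewrite add0r mulmx0 addr0.
rewrite -[sT x *m W *m C *m _]mulmxA (mulmxA C) CAP.
have -> : (sT x *m W *m A *m P *m W *m C *m r x) *+ 2
    = sT x *m ((W *m A *m P *m W) *+ 2) *m C *m r x.
  by rewrite !mulr2n !mulmxDr !mulmxDl !mulmxA.
rewrite -(resolvent_sandwich (mulVmx Mx_unit) (mulmxV Mx_unit) AP).
rewrite !mulmxDr !mulmxDl !mulmxN !mulNmx !mulmxDr !mulmxDl !opprD !mulmxA !addrA.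
by apply.
Qed.

Section CauchyMatrixScheme.
Variables (F : numFieldType) (N1 N2 : nat) (K1 : 'M[F]_N1) (K2 : 'M[F]_N2).
Hypotheses (K1_unit : K1 \in unitmx) (K2_unit : K2 \in unitmx).
Hypotheses (sylvester12_inj : injective (sylvester K1 K2))
           (sylvester21_inj : injective (sylvester K2 K1)).
Variables (M1 : (int -> F) -> 'M[F]_(N1, N2)) (M2 : (int -> F) -> 'M[F]_(N2, N1)).
Variables (r1 s1 : (int -> F) -> 'cV[F]_N1) (r2 s2 : (int -> F) -> 'cV[F]_N2).

Local Notation K := (block_mx K1 0 0 K2).
Local Notation A := (block_mx 1%:M 0 0 (- 1%:M) : 'M[F]_(N1 + N2)).
Local Notation M := (fun y => block_mx 0 (M1 y) (M2 y) 0).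
Local Notation r := (fun y => block_mx (r1 y) 0 0 (r2 y) : 'M[F]_(N1 + N2, 1 + 1)).
Local Notation s := (fun y => block_mx 0 (s1 y) (s2 y) 0 : 'M[F]_(N1 + N2, 1 + 1)).
Local Notation u := (fun y => (s y)^T *m invmx (1%:M + M y) *m r y).
Local Notation v := (fun y => 1%:M - (s y)^T *m invmx (1%:M + M y) *m invmx K *m r y).

Lemma block_K_unit : K \in unitmx.
Proof. by rewrite unitmxE det_ublock unitrM -!unitmxE K1_unit K2_unit. Qed.

Lemma sign_mx_comm_K : A *m K = K *m A.
Proof.
rewrite !mulmx_block !mulmx0 !mul0mx !addr0 !add0r.
by rewrite mul1mx mulmx1 mulNmx mulmxN mul1mx mulmx1.
Qed.

Lemma tr_sign_mx : A^T = A.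
Proof. by rewrite tr_block_mx !trmx0 trmx1 linearN /= trmx1. Qed.

Lemma sign_mx_anticomm_M y : A *m M y = - (M y *m A).
Proof.
rewrite !mulmx_block !mulmx0 !mul0mx !addr0 !add0r !mul1mx !mulmx1.
by rewrite !mulNmx !mulmxN !mul1mx !mulmx1 opp_block_mx !oppr0 opprK.
Qed.

Hypothesis sylvesterKM : forall y, K *m M y - M y *m K = r y *m (s y)^T.
Hypothesis r_pderiv : forall y m, is_pderiv r m y (A *m mxpowz K m *m r y).
Hypothesis s_pderiv : forall y m, is_pderiv s m y (A *m mxpowz K^T m *m s y).
Hypothesis M_unit : forall y, (1%:M + M y) \in unitmx.

Lemma sT_pderiv y m :
  is_pderiv (fun y => (s y)^T) m y ((s y)^T *m mxpowz K m *m A).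
Proof.
have -> : (s y)^T *m mxpowz K m *m A = (A *m mxpowz K^T m *m s y)^T.
  by rewrite !trmx_mul mxpowz_tr trmxK tr_sign_mx mulmxA.
exact: is_pderiv_linear (@s_pderiv y m).
Qed.

Lemma M_pderiv y m :
  is_pderiv M m y (A *m mxpowz K m *m M y + M y *m mxpowz K m *m A).
Proof.
have AP : A *m mxpowz K m = mxpowz K m *m A.
  exact: mxpowz_comm block_K_unit sign_mx_comm_K.
have PK : mxpowz K m *m K = K *m mxpowz K m.
  by rewrite -(mxpowz_comm m block_K_unit (erefl (K *m K))).
apply: (is_pderiv_offdiag sylvester12_inj sylvester21_inj sylvesterKM).
  have := is_pderiv_mulmx (@r_pderiv y m) (@sT_pderiv y m).
  rewrite -[K *m _ - _ *m K]/(sylvester K K _) sylvester_sandwich //; last first.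
    exact: sign_mx_comm_K.
  by rewrite /sylvester sylvesterKM !mulmxA.
apply: anticomm_offdiag; rewrite -(mulmxA (M y)) -AP.
apply: anticomm_sandwich; last exact: sign_mx_anticomm_M.
by rewrite -mulmxA -AP.
Qed.

Lemma pderiv_v_u x n :
  exists Dv Du : 'M[F]_(1 + 1),
    [/\ is_pderiv v (n + 1) x Dv, is_pderiv u n x Du & Dv *m invmx (v x) = - Du].
Proof.
have K_unit := block_K_unit.
have AP m : A *m mxpowz K m = mxpowz K m *m A.
  exact: mxpowz_comm K_unit sign_mx_comm_K.
have resolvent_form_pderiv m C : C *m (A *m mxpowz K m) = A *m mxpowz K m *m C ->
    is_pderiv (fun y => (s y)^T *m invmx (1%:M + M y) *m C *m r y) m x
      (((s x)^T *m invmx (1%:M + M x) *m A *m mxpowz K m *m invmx (1%:M + M x)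
          *m C *m r x) *+ 2).
  move=> CAP; apply: is_pderiv_resolvent_form (AP m) CAP (M_unit x) _ _ _.
  - exact: r_pderiv.
  - exact: sT_pderiv.
  - exact: M_pderiv.
have Du := resolvent_form_pderiv n 1%:M (etrans (mul1mx _) (esym (mulmx1 _))).
have Ki_comm :
    invmx K *m (A *m mxpowz K (n + 1)) = A *m mxpowz K (n + 1) *m invmx K.
  have KiK : invmx K *m K = K *m invmx K by rewrite mulVmx // mulmxV.
  rewrite mulmxA -(invmx_comm K_unit sign_mx_comm_K) -!mulmxA.
  by rewrite (mxpowz_comm _ K_unit KiK).
have Dv := is_pderivB (is_pderiv_cst (n + 1) x 1%:M)
  (resolvent_form_pderiv (n + 1) _ Ki_comm).
rewrite (_ : (fun y => _ *m 1%:M *m _) = u) in Du; last first.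
  by apply/funext => y; rewrite mulmx1.
eexists; eexists; split; [exact: Dv | exact: Du |].
have WM := mulVmx (M_unit x); have MW := mulmxV (M_unit x).
have v_unit := resolvent_conj_unit WM MW K_unit (sylvesterKM x).
rewrite sub0r mulmx1 mxpowzS // !mulmxA.
rewrite (resolvent_conj_factor WM MW K_unit (sylvesterKM x)).
by rewrite !mulr2n mulNmx mulmxDl !mulmxK.
Qed.

End CauchyMatrixScheme.

Theorem theorem1 (R : realType) (N1 N2 : nat) (hN1 : (0 < N1)%N) (hN2 : (0 < N2)%N)
  (K1 : 'M[R[i]]_N1) (K2 : 'M[R[i]]_N2)
  (hK1 : K1 \in unitmx) (hK2 : K2 \in unitmx)
  (hK12 : forall a : R[i], eigenvalue K1 a -> ~~ eigenvalue K2 a)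
  (M1 : (int -> R[i]) -> 'M[R[i]]_(N1, N2))
  (M2 : (int -> R[i]) -> 'M[R[i]]_(N2, N1))
  (r1 s1 : (int -> R[i]) -> 'cV[R[i]]_N1)
  (r2 s2 : (int -> R[i]) -> 'cV[R[i]]_N2) :
  let K : 'M[R[i]]_(N1 + N2) := block_mx K1 0 0 K2 in
  let M : (int -> R[i]) -> 'M[R[i]]_(N1 + N2) :=
    fun x => block_mx 0 (M1 x) (M2 x) 0 in
  let A : 'M[R[i]]_(N1 + N2) := block_mx 1%:M 0 0 (- 1%:M) in
  let r : (int -> R[i]) -> 'M[R[i]]_(N1 + N2, 1 + 1) :=
    fun x => block_mx (r1 x) 0 0 (r2 x) in
  let s : (int -> R[i]) -> 'M[R[i]]_(N1 + N2, 1 + 1) :=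
    fun x => block_mx 0 (s1 x) (s2 x) 0 in
  (forall x, K *m M x - M x *m K = r x *m (s x)^T) ->
  (forall x (n : int), has_pderiv r n x (A *m mxpowz K n *m r x)) ->
  (forall x (n : int), has_pderiv s n x (A *m mxpowz K^T n *m s x)) ->
  (forall x, (1%:M + M x) \in unitmx) ->
  let u : (int -> R[i]) -> 'M[R[i]]_(1 + 1) :=
    fun x => (s x)^T *m invmx (1%:M + M x) *m r x in
  let v : (int -> R[i]) -> 'M[R[i]]_(1 + 1) :=
    fun x => 1%:M - (s x)^T *m invmx (1%:M + M x) *m invmx K *m r x in
  forall (x : int -> R[i]) (n : int),
    exists Dv Du : 'M[R[i]]_(1 + 1),
      [/\ has_pderiv v (n + 1) x Dv, has_pderiv u n x Du &
          Dv *m invmx (v x) = - Du].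
Proof.
move=> K M A r s sylvesterKM r_pderiv s_pderiv M_unit u v x n.
have inj12 : injective (sylvester K1 K2) by exact: sylvester_inj.
have inj21 : injective (sylvester K2 K1).
  by apply: sylvester_inj => a; apply: contraL (hK12 a).
have Dr y m : is_pderiv r m y (A *m mxpowz K m *m r y) by apply/has_pderivP.
have Ds y m : is_pderiv s m y (A *m mxpowz K^T m *m s y) by apply/has_pderivP.
have [Dv [Du [Dv_pderiv Du_pderiv DvDu]]] :=
  pderiv_v_u hK1 hK2 inj12 inj21 sylvesterKM Dr Ds M_unit x n.
exists Dv, Du; split; last exact DvDu.
- apply/has_pderivP; exact Dv_pderiv.
- apply/has_pderivP; exact Du_pderiv.
Qed.
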